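(* Let $X$ be a well-filtered coherent space. If $X\times X$ is a Fréchet space, then $X$ is sober.
   Context: Spaces are $T_0$; the specialization order is $x\le y$ iff $x\in\overline{\{y\}}$, and a subset is saturated if it is an upper set in this order. $X$ is well-filtered if for every filtered family $\mathcal F$ of compact saturated subsets and every open $U$, $\bigcap\mathcal F\subseteq U$ implies $F\subseteq U$ for some $F\in\mathcal F$. $X$ is coherent if the intersection of any two compact saturated subsets is compact. A space is Fréchet if whenever $x$ lies in the closure of a set $A$, some sequence in $A$ converges to $x$. A $T_0$ space is sober if every irreducible closed set equals $\overline{\{x\}}$ for some point $x$. *)

From HB Require Import structures.
From mathcomp Require Import all_boot all_order.
From mathcomp Require Import all_classical.
From mathcomp Require Import topology.
Set Implicit Arguments. Unset Strict Implicit. Unset Printing Implicit Defensive.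
Local Open Scope classical_set_scope.

Section NonHausdorff.
Context {T : topologicalType}.

Definition spec_le (x y : T) : Prop := closure [set y] x.

Definition saturated (A : set T) : Prop :=
  forall x y, A x -> spec_le x y -> A y.

Definition compact_saturated (A : set T) : Prop := compact A /\ saturated A.

Definition filtered_cs_family (F : set (set T)) : Prop :=
  [/\ F !=set0,
      (forall A, F A -> compact_saturated A) &
      (forall A B, F A -> F B -> exists2 C, F C & C `<=` A `&` B)].

Definition well_filtered : Prop :=
  forall (F : set (set T)) (U : set T), filtered_cs_family F -> open U ->
    \bigcap_(A in F) A `<=` U -> exists2 A, F A & A `<=` U.

Definition coherent : Prop :=
  forall A B : set T, compact_saturated A -> compact_saturated B ->
    compact (A `&` B).

(* Frechet(-Urysohn): closure points are limits of sequences from the set *)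
Definition frechet_space : Prop :=
  forall (A : set T) (x : T), closure A x ->
    exists u : nat -> T, (forall n, A (u n)) /\ (u @ \oo --> x).

Definition irreducible_closed (A : set T) : Prop :=
  [/\ closed A, A !=set0 &
      forall B C : set T, closed B -> closed C -> A `<=` B `|` C ->
        A `<=` B \/ A `<=` C].

Definition sober : Prop :=
  forall A : set T, irreducible_closed A -> exists x : T, A = closure [set x].

End NonHausdorff.

From mathcomp Require Import all_boot all_order all_classical topology.
Set Implicit Arguments. Unset Strict Implicit. Unset Printing Implicit Defensive.
Local Open Scope classical_set_scope.

(* In a well-filtered space a nonempty closed set A that is directed in the
   specialization order has a generic point: the upper sets of the points of A
   form a filtered family of compact saturated sets each meeting A, so some
   point of A lies in all of them, i.e. above every point of A.
   It remains to see that an irreducible closed A is directed. For m, m' in A,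
   irreducibility puts (m, m') in the closure of the diagonal of A, so the
   Frechet property of X x X gives a single sequence in A converging to both m
   and m'. A convergent sequence together with its limit is compact, so by
   coherence the sets K n = ↑({m} ∪ tail_n) ∩ ↑({m'} ∪ tail_n) form a
   filtered family of compact saturated sets, each meeting A at the n-th term.
   A point of A in all K n lies, for every n, above m or above a term of index
   at least n; as open sets are upper sets, it lies above m, and likewise
   above m'. *)

Section Specialization.
Context {T : topologicalType}.

Lemma spec_leP (x y : T) : spec_le x y <-> forall U, open U -> U x -> U y.
Proof.
split=> [xy U oU Ux|xyU B].
  by have [_ [-> Uy]] := xy U (open_nbhs_nbhs (conj oU Ux)).
rewrite nbhsE => -[U [oU Ux] UB]; exists y; split=> //.
exact/UB/(xyU U).
Qed.

Lemma open_saturated (U : set T) : open U -> saturated U.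
Proof. by move=> oU x y Ux /spec_leP; apply. Qed.

Lemma spec_le_refl (x : T) : spec_le x x.
Proof. exact: subset_closure. Qed.

Lemma spec_le_trans (x y z : T) : spec_le x y -> spec_le y z -> spec_le x z.
Proof. by move=> /spec_leP xy /spec_leP yz; apply/spec_leP => U oU /xy/yz; apply. Qed.

Definition saturation (K : set T) := [set y | exists2 x, K x & spec_le x y].

Lemma saturation_saturated (K : set T) : saturated (saturation K).
Proof. by move=> x y [z Kz zx] xy; exists z => //; exact: spec_le_trans xy. Qed.

Lemma sub_saturation (K : set T) : K `<=` saturation K.
Proof. by move=> x Kx; exists x => //; exact: spec_le_refl. Qed.

Lemma saturationS (A B : set T) : A `<=` B -> saturation A `<=` saturation B.
Proof. by move=> AB y [x Ax xy]; exists x => //; exact: AB. Qed.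

Lemma compact_saturation (K : set T) : compact K -> compact (saturation K).
Proof.
move=> /compact_near_coveringP cK; apply/compact_near_coveringP => I F P FF cover.
have KP : \forall i \near F, K `<=` (fun x => forall y, spec_le x y -> P i y).
  apply: cK => x Kx.
  have [[U E] [/= xU FE] UE] := cover x (sub_saturation Kx).
  move: xU; rewrite nbhsE => -[U' [oU' U'x] U'U].
  exists (U', E); first by split => //; exact: open_nbhs_nbhs.
  move=> [x' i] [/= U'x' Ei] y x'y; apply: (UE (y, i)); split => //=.
  exact/U'U/(open_saturated oU' U'x').
by apply: filterS KP => i KP y [x Kx xy]; exact: KP x Kx y xy.
Qed.

Lemma compact_saturated_saturation (K : set T) :
  compact K -> compact_saturated (saturation K).
Proof. by split; [exact: compact_saturation|exact: saturation_saturated]. Qed.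

Definition tail (v : nat -> T) (m : T) (n : nat) := m |` range (v \o addn^~ n).

Lemma compact_cvg_range (v : nat -> T) (m : T) :
  v @ \oo --> m -> compact (m |` range v).
Proof.
move=> vm; apply/compact_near_coveringP => I F P FF cover.
have [[U E] [/= mU FE] UE] := cover m (or_introl erefl).
have [N _ vU] := vm _ mU.
have : \forall i \near F, forall k : 'I_N, P i (v k).
  apply: filter_forall => k.
  have /cover[[U' E'] [/= vkU' FE'] U'E'] : (m |` range v) (v k) by right; exists k.
  by apply: filterS FE' => i E'i; apply: (U'E' (v k, i)); split => //; exact: nbhs_singleton.
apply: filter_app; apply: filterS FE => i Ei Pv x [->|[k _ <-]].
  by apply: (UE (m, i)); split => //; exact: nbhs_singleton.
have [kN|Nk] := ltnP k N; first exact: (Pv (Ordinal kN)).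
by apply: (UE (v k, i)); split => //; exact: vU.
Qed.

Lemma compact_tail (v : nat -> T) (m : T) (n : nat) :
  v @ \oo --> m -> compact (tail v m n).
Proof. by move=> vm; apply: compact_cvg_range; apply: cvg_comp (cvg_addnr n) vm. Qed.

Lemma tail_subset (v : nat -> T) (m : T) (n p : nat) :
  (n <= p)%N -> tail v m p `<=` tail v m n.
Proof.
move=> np y [->|[k _ <-]]; [by left|right].
by exists (k + (p - n))%N => //=; rewrite -addnA subnK.
Qed.

Lemma cvg_spec_le (v : nat -> T) (m a : T) : v @ \oo --> m ->
  (forall n, saturation (tail v m n) a) -> spec_le m a.
Proof.
move=> vm tail_a; apply/spec_leP => U oU Um.
have [N _ vU] := vm _ (open_nbhs_nbhs (conj oU Um)).
have [y [->|[k _ <-]] ya] := tail_a N; first exact: open_saturated oU _ _ Um ya.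
by apply: open_saturated oU _ _ _ ya; apply: vU; rewrite /= leq_addl.
Qed.

End Specialization.

Section WellFiltered.
Context {T : topologicalType}.

Definition directed (A : set T) := forall a b, A a -> A b ->
  exists z, [/\ A z, spec_le a z & spec_le b z].

Lemma filtered_cs_family_nonincreasing (K : nat -> set T) :
  (forall n, compact_saturated (K n)) ->
  (forall n p, (n <= p)%N -> K p `<=` K n) -> filtered_cs_family (range K).
Proof.
move=> csK Kdecr; split; first by exists (K 0); exists 0.
  by move=> _ [n _ <-].
move=> _ _ [n _ <-] [p _ <-]; exists (K (maxn n p)); first by exists (maxn n p).
by move=> x Kx; split; apply: Kdecr Kx; rewrite ?leq_maxl ?leq_maxr.
Qed.

Lemma well_filtered_meet (F : set (set T)) (A : set T) :
  @well_filtered T -> filtered_cs_family F -> closed A ->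
  (forall C, F C -> C `&` A !=set0) -> \bigcap_(C in F) C `&` A !=set0.
Proof.
move=> wf FF cA FA; apply: contrapT => noFA.
have FsubAC : \bigcap_(C in F) C `<=` ~` A by move=> x Fx Ax; apply: noFA; exists x.
have [C FC CsubAC] := wf F _ FF (closed_openC cA) FsubAC.
by have [x [Cx Ax]] := FA C FC; exact: CsubAC x Cx Ax.
Qed.

Lemma directed_closed_generic_point (A : set T) : @well_filtered T ->
  closed A -> A !=set0 -> directed A -> exists x, A = closure [set x].
Proof.
move=> wf cA [a0 Aa0] dirA.
pose F := [set saturation [set a] | a in A].
have FF : filtered_cs_family F.
  split; first by exists (saturation [set a0]); exists a0.
    by move=> _ [a _ <-]; exact/compact_saturated_saturation/compact_set1.
  move=> _ _ [a Aa <-] [b Ab <-]; have [z [Az az bz]] := dirA a b Aa Ab.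
  exists (saturation [set z]); first by exists z.
  by move=> y [_ -> zy]; split; [exists a|exists b] => //; exact: spec_le_trans zy.
have [x [Fx Ax]] : \bigcap_(C in F) C `&` A !=set0.
  by apply: well_filtered_meet => // _ [a Aa <-]; exists a; split => //; exact: sub_saturation.
exists x; apply/seteqP; split => [a Aa|y xy].
  by have [_ -> ] := Fx (saturation [set a]) (ex_intro2 _ _ a Aa erefl).
by rewrite (closure_id A).1 //; apply: closureS xy => _ ->.
Qed.

End WellFiltered.

Section Irreducible.
Context {X : topologicalType}.

Lemma irreducible_openI (A U V : set X) : irreducible_closed A ->
  open U -> open V -> A `&` U !=set0 -> A `&` V !=set0 -> A `&` U `&` V !=set0.
Proof.
move=> [_ _ irrA] oU oV [x [Ax Ux]] [y [Ay Vy]]; apply: contrapT => noAUV.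
have : A `<=` ~` U `|` ~` V.
  by move=> a Aa; apply/not_andP => -[Ua Va]; apply: noAUV; exists a.
by case/(irrA _ _ (open_closedC oU) (open_closedC oV)) => [/(_ x Ax)|/(_ y Ay)].
Qed.

Lemma irreducible_diagonal_closure (A : set X) (m m' : X) :
  irreducible_closed A -> A m -> A m' ->
  closure [set (a, a) | a in A] (m, m').
Proof.
move=> irrA Am Am' B [[U V] [/= mU m'V] UVB].
move: mU m'V; rewrite !nbhsE => -[U' [oU' U'm] U'U] [V' [oV' V'm] V'V].
have [||a [[Aa U'a] V'a]] := irreducible_openI irrA oU' oV'.
- by exists m.
- by exists m'.
by exists (a, a); split; [exists a|apply: UVB; split; [exact: U'U|exact: V'V]].
Qed.

Lemma irreducible_common_limit (A : set X) (m m' : X) :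
  @frechet_space (X * X)%type -> irreducible_closed A -> A m -> A m' ->
  exists v : nat -> X, [/\ forall n, A (v n), v @ \oo --> m & v @ \oo --> m'].
Proof.
move=> fr irrA Am Am'.
have [u [diag_u um]] := fr _ _ (irreducible_diagonal_closure irrA Am Am').
have u_fst_snd n : (u n).1 = (u n).2 /\ A (u n).1 by have [a Aa <-] := diag_u n.
exists (fst \o u); split.
- by move=> n; have [] := u_fst_snd n.
- exact: cvg_comp um cvg_fst.
- have -> : fst \o u = snd \o u by apply/funext => n; have [] := u_fst_snd n.
  exact: cvg_comp um cvg_snd.
Qed.

Lemma irreducible_directed (A : set X) : @well_filtered X -> @coherent X ->
  @frechet_space (X * X)%type -> irreducible_closed A -> directed A.
Proof.
move=> wf coh fr irrA m m' Am Am'.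
have [v [Av vm vm']] := irreducible_common_limit fr irrA Am Am'.
pose K n := saturation (tail v m n) `&` saturation (tail v m' n).
have FK : filtered_cs_family (range K).
  apply: filtered_cs_family_nonincreasing => [n|n p np].
    split; first by apply: coh; exact/compact_saturated_saturation/compact_tail.
    by move=> x y [mx m'x] xy; split; exact: saturation_saturated xy.
  by move=> x [mx m'x]; split; [move: mx|move: m'x]; apply: saturationS; exact: tail_subset.
have [cA _ _] := irrA.
have [|z [Kz Az]] := well_filtered_meet wf FK cA.
  move=> _ [n _ <-]; exists (v n); split => //.
  by split; apply: sub_saturation; right; exists 0.
exists z; split => //; [apply: cvg_spec_le vm _|apply: cvg_spec_le vm' _] => n;
  by have [] := Kz (K n) (ex_intro2 _ _ n I erefl).
Qed.

End Irreducible.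

Theorem corollary3p11 (X : topologicalType) :
  @kolmogorov_space X -> @well_filtered X -> @coherent X ->
  @frechet_space (X * X)%type -> @sober X.
Proof.
(* T0 would only give uniqueness of the generic point. *)
move=> _ wf coh fr A irrA; have [cA A0 _] := irrA.
exact/(directed_closed_generic_point wf cA A0)/irreducible_directed.
Qed.
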